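(* Let $G$ be a connected graph of order $n$ with diameter $\mathrm{diam}(G)$, and let $g$ be an integer with $0\leq g\leq \lfloor \frac{\mathrm{diam}(G)}{2}\rfloor-1$. Then $G$ has an $R_g$-cutset and $$\kappa_g(G)\leq n-\mathrm{diam}(G).$$ Moreover, the bound is sharp: equality holds for the path $P_n$.
   Context: All graphs are finite and simple. $\mathrm{diam}(G)$ is the maximum distance between two vertices of $G$. A set $S\subseteq V(G)$ is a cutset if $G-S$ is disconnected. For a non-negative integer $g$, a cutset $S$ is an $R_g$-cutset if every connected component of $G-S$ has at least $g+1$ vertices. If $G$ has at least one $R_g$-cutset, the $g$-extra connectivity $\kappa_g(G)$ is the minimum cardinality of an $R_g$-cutset of $G$. *)

From mathcomp Require Import all_boot.
Set Implicit Arguments. Unset Strict Implicit. Unset Printing Implicit Defensive.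

Definition simple_graph (T : finType) (e : rel T) : Prop :=
  symmetric e /\ irreflexive e.

Definition connected_graph (T : finType) (e : rel T) : Prop :=
  forall x y : T, connect e x y.

Fixpoint ball (T : finType) (e : rel T) (k : nat) (x : T) : {set T} :=
  match k with
  | 0 => [set x]
  | k'.+1 => ball e k' x :|: [set y | [exists z in ball e k' x, e z y]]
  end.

(* dist e x y = least k such that y is within k steps of x (for connected
   graphs, the distance is < #|T|, so the search range suffices). *)
Definition dist (T : finType) (e : rel T) (x y : T) : nat :=
  find (fun k => y \in ball e k x) (iota 0 #|T|).

Definition diam (T : finType) (e : rel T) : nat :=
  \max_(x : T) \max_(y : T) dist e x y.

Definition del_rel (T : finType) (e : rel T) (S : {set T}) : rel T :=
  [rel x y | [&& e x y, x \notin S & y \notin S]].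

Definition comp (T : finType) (e : rel T) (S : {set T}) (v : T) : {set T} :=
  [set w | (w \notin S) && connect (del_rel e S) v w].

Definition is_cutset (T : finType) (e : rel T) (S : {set T}) : bool :=
  [exists u, exists v,
     [&& u \notin S, v \notin S & ~~ connect (del_rel e S) u v]].

Definition is_Rg_cutset (T : finType) (e : rel T) (g : nat) (S : {set T}) : bool :=
  is_cutset e S && [forall v, (v \notin S) ==> (g.+1 <= #|comp e S v|)].

Definition has_Rg_cutset (T : finType) (e : rel T) (g : nat) : Prop :=
  exists S : {set T}, is_Rg_cutset e g S.

(* g-extra connectivity: minimum size of an R_g-cutset (meaningful when
   one exists; the default #|T| is never attained below a genuine cutset). *)
Definition kappa (T : finType) (e : rel T) (g : nat) : nat :=
  \big[minn/#|T|]_(S : {set T} | is_Rg_cutset e g S) #|S|.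

Definition path_rel (n : nat) : rel 'I_n :=
  fun i j : 'I_n => (i.+1 == j :> nat) || (j.+1 == i :> nat).
Arguments path_rel n : clear implicits.

From Pilot Require Import Defs.
From mathcomp Require Import all_boot.
From mathcomp Require Import zify.
Set Implicit Arguments. Unset Strict Implicit. Unset Printing Implicit Defensive.

(* Take a diametral pair u, v with d = dist u v = diam G and a geodesic
   p 0 = u, ..., p d = v, so that p i lies at distance exactly i from u.
   Let A be the ball of radius g around u, B the ball of radius g+1, and
   K the component of p (g+2) in G - B.  No edge joins A to K (edges leave
   A only into B), so S := V \ (A u K) separates u from p (g+2).  The
   component of G - S through a vertex of A contains p 0, ..., p g, and
   the one through a vertex of K contains p (g+2), ..., p d; both have at
   least g+1 vertices because 2(g+1) <= d.  Since A and K are disjoint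
   and contain those g+1 and d-g-1 geodesic vertices, #|S| <= n - d. *)

Section Balls.
Variables (T : finType) (e : rel T).

Lemma ball0 x y : (y \in ball e 0 x) = (y == x).
Proof. by rewrite /= inE. Qed.

Lemma ball_subS k x : ball e k x \subset ball e k.+1 x.
Proof. exact: subsetUl. Qed.

Lemma ball_mono j k x : j <= k -> ball e j x \subset ball e k x.
Proof.
elim: k => [|k IHk]; first by rewrite leqn0 => /eqP ->.
rewrite leq_eqVlt => /orP[/eqP -> //|]; rewrite ltnS => /IHk sub_jk.
exact: subset_trans sub_jk (ball_subS k x).
Qed.

Lemma ball_step k x z y : z \in ball e k x -> e z y -> y \in ball e k.+1 x.
Proof.
move=> zk zy; rewrite /= !inE; apply/orP; right.
by apply/existsP; exists z; rewrite zk.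
Qed.

Lemma ball_stepP k x y : y \in ball e k.+1 x ->
  y \in ball e k x \/ exists2 z, z \in ball e k x & e z y.
Proof.
rewrite /= inE => /orP[->|]; first by left.
by rewrite inE => /existsP[z /andP[zk zy]]; right; exists z.
Qed.

Lemma path_last_ball u p : path e u p -> last u p \in ball e (size p) u.
Proof.
elim/last_ind: p => [|p z IHp] /=; first by rewrite ball0.
rewrite rcons_path last_rcons size_rcons => /andP[pth pz].
exact: ball_step (IHp pth) pz.
Qed.

Lemma dist_spec u v : connect e u v ->
  v \in ball e (dist e u v) u /\ forall k, k < dist e u v -> v \notin ball e k u.
Proof.
move=> /connectP[p pth ->]; have [q qpth quniq _] := shortenP pth.
have size_q : size q < #|T|.
  by have := max_card (mem (u :: q)); move/card_uniqP: quniq => ->.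
pose inball k := last u q \in ball e k u.
have has_r : has inball (iota 0 #|T|).
  by apply/hasP; exists (size q); rewrite ?mem_iota //; apply: path_last_ball.
have find_lt : find inball (iota 0 #|T|) < #|T|.
  by move: has_r; rewrite has_find size_iota.
split; first by have := nth_find 0 has_r; rewrite nth_iota.
move=> k lt_k; have := before_find 0 lt_k.
by rewrite nth_iota ?(ltn_trans lt_k) // => ->.
Qed.

Lemma dist_le_diam x y : dist e x y <= diam e.
Proof.
apply: leq_trans (leq_bigmax (F := fun y => dist e x y) y) _.
exact: (leq_bigmax (F := fun x => \max_y dist e x y) x).
Qed.

Lemma diametral_pair : 0 < diam e -> exists u v, dist e u v = diam e.
Proof.
case: (pickP (@predT T)) => [x0 _ _|none]; last by rewrite /diam big_pred0.
have T_gt0 : 0 < #|T| by apply/card_gt0P; exists x0.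
have [u diam_u] := eq_bigmax (fun x => \max_y dist e x y) T_gt0.
have [v max_v] := eq_bigmax (fun y => dist e u y) T_gt0.
by exists u, v; rewrite /diam diam_u max_v.
Qed.

Lemma geodesic u d v : v \in ball e d u ->
  (forall k, k < d -> v \notin ball e k u) ->
  exists p : nat -> T, [/\ p 0 = u, p d = v,
     (forall i, i <= d -> p i \in ball e i u),
     (forall k i, k < i -> i <= d -> p i \notin ball e k u) &
     (forall i, i < d -> e (p i) (p i.+1))].
Proof.
elim: d v => [|d IHd] v vd vfar.
  exists (fun=> v); split=> // [|i|k i]; last lia.
  - by move: vd; rewrite ball0 => /eqP.
  - by rewrite leqn0 => /eqP ->.
have [vd'|[z zd zv]] := ball_stepP vd; first by have := vfar d (ltnSn d); rewrite vd'.
have zfar k : k < d -> z \notin ball e k u.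
  by move=> lt_kd; apply: contra (vfar k.+1 lt_kd) => zk; apply: ball_step zk zv.
have [p [p0 pd pin pout pe]] := IHd z zd zfar.
exists (fun i => if i == d.+1 then v else p i); split=> /= [|||k i|i].
- by rewrite p0.
- by rewrite eqxx.
- by move=> i; case: eqP => [-> //|ne_id le_id]; apply: pin; lia.
- by case: eqP => [E lt_ki _|ne_id lt_ki le_id]; [apply: vfar; lia | apply: pout; lia].
- move=> lt_id; case: eqP => [|ne_id]; first lia.
  case: eqP => [E|ne_id']; last by apply: pe; lia.
  have -> : i = d by lia.
  by rewrite pd.
Qed.

End Balls.

Section DeletedGraph.
Variables (T : finType) (e : rel T).

Lemma connect_invariant (r r' : rel T) (P : pred T) a b :
  (forall x y, P x -> r x y -> P y /\ r' x y) -> P a -> connect r a b ->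
  P b /\ connect r' a b.
Proof.
move=> step Pa /connectP[p]; elim/last_ind: p b => [|p z IHp] b /=.
  by move=> _ ->.
rewrite rcons_path last_rcons => /andP[pth pz] ->.
have [Pz conn_z] := IHp _ pth erefl; have [Pb r'zb] := step _ _ Pz pz.
by split => //; apply: connect_trans conn_z (connect1 r'zb).
Qed.

Lemma del_rel_sym (X : {set T}) : symmetric e -> symmetric (del_rel e X).
Proof.
by move=> sym_e x y; rewrite /del_rel /= sym_e; case: (x \in X); case: (y \in X).
Qed.

Lemma ball_connect k u (X : {set T}) x : (forall y, y \in ball e k u -> y \notin X) ->
  x \in ball e k u -> connect (del_rel e X) u x.
Proof.
elim: k x => [|k IHk] x outX; first by rewrite ball0 => /eqP ->.
have outX' y : y \in ball e k u -> y \notin X.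
  by move=> yk; apply: outX; apply: (subsetP (ball_subS e k u)).
move=> xk1; have [xk|[z zk zx]] := ball_stepP xk1; first exact: IHk.
apply: connect_trans (IHk _ outX' zk) (connect1 _).
by rewrite /del_rel /= zx outX' //= outX.
Qed.

Lemma segment_connect (p : nat -> T) (X : {set T}) a b :
  (forall i, a <= i < b -> e (p i) (p i.+1)) ->
  (forall i, a <= i <= b -> p i \notin X) ->
  forall i, a <= i <= b -> connect (del_rel e X) (p a) (p i).
Proof.
move=> pe outX i /andP[]; elim: i => [|i IHi] le_ai le_ib.
  by rewrite leqn0 in le_ai; rewrite (eqP le_ai).
have [le_ai'|lt_ia] := leqP a i; last by have -> : a = i.+1 by lia.
apply: connect_trans (IHi le_ai' (ltnW le_ib)) (connect1 _).
by rewrite /del_rel /= pe ?outX //; lia.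
Qed.

(* The component of w in G - S contains every vertex outside S that is
   connected to w, so it is at least as large as any set of such vertices.
   ([Defs.comp] is qualified since [comp] is also function composition.) *)
Lemma comp_card_ge (S Q : {set T}) w :
  (forall x, x \in Q -> x \notin S /\ connect (del_rel e S) w x) ->
  #|Q| <= #|Defs.comp e S w|.
Proof.
move=> inQ; apply: subset_leq_card; apply/subsetP => x /inQ[xS wx].
by rewrite inE xS.
Qed.

Lemma cutset_neq0 (S : {set T}) : connected_graph e -> is_cutset e S -> S != set0.
Proof.
move=> conn_e; apply: contraL => /eqP ->.
apply/negP => /existsP[x /existsP[y /and3P[_ _ /negP]]]; apply.
apply: (connect_sub _ (conn_e x y)) => a b ab.
by apply: connect1; rewrite /del_rel /= ab !inE.
Qed.

End DeletedGraph.

Section Separator.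
Variables (T : finType) (e : rel T).
Hypothesis sym_e : symmetric e.

Variables (u : T) (g d : nat) (p : nat -> T).
Hypothesis p0 : p 0 = u.
Hypothesis p_in : forall i, i <= d -> p i \in ball e i u.
Hypothesis p_out : forall k i, k < i -> i <= d -> p i \notin ball e k u.
Hypothesis p_edge : forall i, i < d -> e (p i) (p i.+1).
Hypothesis long : g.+1 + g.+1 <= d.

Definition near : {set T} := ball e g u.

Definition far : {set T} :=
  [set x | connect (del_rel e (ball e g.+1 u)) (p g.+2) x].

Definition separator : {set T} := ~: (near :|: far).

Lemma notin_separator x : (x \notin separator) = (x \in near) || (x \in far).
Proof. by rewrite !inE negbK. Qed.

Lemma near_geodesic i : i <= g -> p i \in near.
Proof. by move=> le_ig; apply: (subsetP (ball_mono e u le_ig)); apply: p_in; lia. Qed.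

(* Far vertices are reached from p (g+2) avoiding the (g+1)-ball, hence
   lie outside it. *)
Lemma far_outside x : x \in far -> x \notin ball e g.+1 u.
Proof.
rewrite inE => conn_x.
have step y z : y \notin ball e g.+1 u -> del_rel e (ball e g.+1 u) y z ->
    z \notin ball e g.+1 u /\ del_rel e (ball e g.+1 u) y z.
  by move=> _ yz; split=> //; case/and3P: (yz).
by have [] := connect_invariant step (p_out (ltnSn g.+1) _) conn_x; lia.
Qed.

Lemma far_geodesic i : g.+2 <= i <= d -> p i \in far.
Proof.
move=> range_i; rewrite inE; apply: segment_connect range_i.
  by move=> j range_j; apply: p_edge; lia.
by move=> j range_j; apply: p_out; lia.
Qed.

Lemma near_far_disjoint x : x \in near -> x \notin far.
Proof.
move=> x_near; apply: contraL x_near => /far_outside; apply: contra.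
exact: (subsetP (ball_subS e g u)).
Qed.

(* G - separator has no edge leaving the near part: such an edge ends in
   the (g+1)-ball, which the far part avoids. *)
Lemma near_closed x y : x \in near -> del_rel e separator x y ->
  y \in near /\ del_rel e separator x y.
Proof.
move=> x_near xy; split=> //; case/and3P: (xy) => exy _.
rewrite notin_separator => /orP[// | y_far].
by have := far_outside y_far; rewrite (ball_step x_near exy).
Qed.

Lemma far_closed x y : x \in far -> del_rel e (ball e g.+1 u) x y ->
  y \in far /\ del_rel e separator x y.
Proof.
move=> x_far xy; have y_far : y \in far.
  by move: x_far; rewrite !inE => conn_x; apply: connect_trans conn_x (connect1 xy).
split=> //; case/and3P: xy => exy _ _.
by rewrite /del_rel /= exy !notin_separator x_far y_far !orbT.
Qed.

Lemma u_near : u \in near.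
Proof. by rewrite -p0; apply: near_geodesic. Qed.

Lemma separator_separates : ~~ connect (del_rel e separator) u (p g.+2).
Proof.
apply/negP => conn_u; have [p_near _] := connect_invariant near_closed u_near conn_u.
by have := near_far_disjoint p_near; rewrite far_geodesic //; lia.
Qed.

(* Distinct positions on the geodesic carry distinct vertices, so a
   segment of m consecutive geodesic vertices has m elements. *)
Lemma card_geodesic_segment a m :
  a + m <= d.+1 -> #|[set p (a + i) | i : 'I_m]| = m.
Proof.
move=> le_amd; rewrite card_imset ?card_ord // => i j /= eq_ij; apply/val_inj/eqP.
have lt_im := ltn_ord i; have lt_jm := ltn_ord j.
have [lt_ij|lt_ji|] := ltngtP i j => //; [move: eq_ij | move: (esym eq_ij)] => eq_p.
- have /negP[] := @p_out (a + i) (a + j) ltac:(lia) ltac:(lia).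
  by rewrite -eq_p p_in //; lia.
- have /negP[] := @p_out (a + j) (a + i) ltac:(lia) ltac:(lia).
  by rewrite -eq_p p_in //; lia.
Qed.

Definition near_segment : {set T} := [set p (0 + i) | i : 'I_g.+1].
Definition far_segment : {set T} := [set p (g.+2 + i) | i : 'I_(d - g.+1)].

Lemma near_segment_sub : near_segment \subset near.
Proof.
by apply/subsetP => _ /imsetP[i _ ->]; apply: near_geodesic; rewrite add0n -ltnS.
Qed.

Lemma far_segment_sub : far_segment \subset far.
Proof.
by apply/subsetP => _ /imsetP[i _ ->]; apply: far_geodesic; have := ltn_ord i; lia.
Qed.

(* Each component of G - separator through the near part contains the
   g+1 vertices p 0, ..., p g. *)
Lemma comp_near w : w \in near -> g.+1 <= #|Defs.comp e separator w|.
Proof.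
move=> w_near; have conn_uw : connect (del_rel e separator) u w.
  by apply: ball_connect w_near => y y_near; rewrite notin_separator y_near.
rewrite -{1}(card_geodesic_segment (a := 0) (m := g.+1)) //; last lia.
apply: comp_card_ge => _ /imsetP[i _ ->]; rewrite add0n.
have le_ig : i <= g by rewrite -ltnS.
split; first by rewrite notin_separator near_geodesic.
rewrite (sym_connect_sym (del_rel_sym _ sym_e)) in conn_uw.
apply: connect_trans conn_uw _; rewrite -p0; apply: (segment_connect (b := g)).
- by move=> j range_j; apply: p_edge; lia.
- by move=> j range_j; rewrite notin_separator near_geodesic //; lia.
- by rewrite leq0n.
Qed.

(* Each component of G - separator through the far part contains the
   d-g-1 >= g+1 vertices p (g+2), ..., p d. *)
Lemma comp_far w : w \in far -> g.+1 <= #|Defs.comp e separator w|.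
Proof.
move=> w_far; have conn_w : connect (del_rel e separator) (p g.+2) w.
  have p_far : p g.+2 \in far by apply: far_geodesic; lia.
  by move: (w_far); rewrite inE => /(connect_invariant far_closed p_far)[].
apply: leq_trans (_ : d - g.+1 <= _); first lia.
rewrite -{1}(card_geodesic_segment (a := g.+2) (m := d - g.+1)); last lia.
apply: comp_card_ge => _ /imsetP[i _ ->]; have lt_i := ltn_ord i.
split; first by rewrite notin_separator far_geodesic ?orbT //; lia.
rewrite (sym_connect_sym (del_rel_sym _ sym_e)) in conn_w.
apply: connect_trans conn_w _; apply: (segment_connect (b := d)).
- by move=> j range_j; apply: p_edge; lia.
- by move=> j range_j; rewrite notin_separator far_geodesic ?orbT //; lia.
- lia.
Qed.

Lemma separator_Rg_cutset : is_Rg_cutset e g separator.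
Proof.
apply/andP; split.
  apply/existsP; exists u; apply/existsP; exists (p g.+2).
  rewrite !notin_separator u_near far_geodesic ?orbT ?separator_separates //; lia.
apply/forallP => w; apply/implyP; rewrite notin_separator.
by case/orP; [apply: comp_near | apply: comp_far].
Qed.

(* The near and far parts are disjoint and contain g+1 and d-g-1 geodesic
   vertices respectively, so the separator has at most n - d vertices. *)
Lemma card_separator : #|separator| <= #|T| - d.
Proof.
have disj : [disjoint near & far].
  rewrite -setI_eq0 -subset0; apply/subsetP => x.
  by rewrite inE => /andP[/near_far_disjoint/negP].
have card_near := subset_leq_card near_segment_sub.
have card_far := subset_leq_card far_segment_sub.
rewrite (card_geodesic_segment (a := 0) (m := g.+1)) in card_near; last lia.
rewrite (card_geodesic_segment (a := g.+2) (m := d - g.+1)) in card_far; last lia.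
have := cardsC (near :|: far); rewrite cardsU (disjoint_setI0 disj) cards0 subn0.
rewrite /separator; lia.
Qed.

End Separator.

Lemma small_Rg_cutset (T : finType) (e : rel T) (g : nat) :
  symmetric e -> connected_graph e -> g.+1 <= (diam e)./2 ->
  exists S : {set T}, is_Rg_cutset e g S /\ #|S| <= #|T| - diam e.
Proof.
move=> sym_e conn_e half_diam.
have long : g.+1 + g.+1 <= diam e.
  rewrite addnn; apply: leq_trans (leq_subr (odd (diam e)) _).
  by rewrite -halfK leq_double.
have [u [v dist_uv]] := diametral_pair (e := e) (leq_trans (ltn0Sn _) long).
have [v_in v_out] := dist_spec (conn_e u v); rewrite dist_uv in v_in v_out.
have [p [p0 _ p_in p_out p_edge]] := geodesic v_in v_out.
exists (separator e u g p); split.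
- exact: (@separator_Rg_cutset _ _ sym_e _ g _ _ p0 p_in p_out p_edge long).
- exact: (@card_separator _ _ _ g _ _ p_in p_out p_edge long).
Qed.

Lemma kappa_le (T : finType) (e : rel T) (g : nat) (S : {set T}) :
  is_Rg_cutset e g S -> kappa e g <= #|S|.
Proof.
move=> RgS; rewrite /kappa -big_filter.
have : S \in [seq X <- index_enum _ | is_Rg_cutset e g X].
  by rewrite mem_filter RgS mem_index_enum.
elim: [seq X <- _ | _] => [//|X s IHs]; rewrite inE big_cons.
case/orP => [/eqP <-|/IHs le_s]; first exact: geq_minl.
exact: leq_trans (geq_minr _ _) le_s.
Qed.

Lemma kappa_gt0 (T : finType) (e : rel T) (g : nat) :
  connected_graph e -> has_Rg_cutset e g -> 0 < kappa e g.
Proof.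
move=> conn_e [S0 /andP[cut0 _]]; rewrite /kappa.
apply: (big_ind (fun k => 0 < k)).
- by case/set0Pn: (cutset_neq0 conn_e cut0) => x _; apply/card_gt0P; exists x.
- by move=> a b a_gt0 b_gt0; rewrite leq_min a_gt0 b_gt0.
- by move=> S /andP[cutS _]; rewrite card_gt0 (cutset_neq0 conn_e cutS).
Qed.

Lemma path_simple n : simple_graph (path_rel n).
Proof.
split=> [i j|i]; first by rewrite /path_rel orbC.
by rewrite /path_rel orbb; apply/negP => /eqP; lia.
Qed.

Lemma path_connected n : connected_graph (path_rel n.+1).
Proof.
have from0 k : k <= n -> connect (path_rel n.+1) ord0 (inord k).
  elim: k => [|k IHk] le_kn.
    by rewrite (_ : inord 0 = ord0) //; apply/val_inj; rewrite /= inordK.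
  apply: connect_trans (IHk (ltnW le_kn)) (connect1 _).
  by rewrite /path_rel !inordK ?eqxx //; lia.
have sym_conn := sym_connect_sym (proj1 (@path_simple n.+1)).
move=> i j; rewrite -(inord_val i) -(inord_val j).
apply: (@connect_trans _ _ ord0); first rewrite sym_conn.
all: by apply: from0; rewrite -ltnS.
Qed.

Lemma path_ball n k (i : 'I_n.+1) : i \in ball (path_rel n.+1) k ord0 -> i <= k.
Proof.
elim: k i => [|k IHk] i; first by rewrite ball0 => /eqP ->.
case/ball_stepP => [/IHk|[j /IHk le_jk]]; first exact: leqW.
by rewrite /path_rel => /orP[/eqP|/eqP]; lia.
Qed.

Lemma path_diam n : n <= diam (path_rel n.+1).
Proof.
apply: leq_trans (dist_le_diam _ ord0 ord_max).
have [in_ball _] := dist_spec (@path_connected n ord0 ord_max).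
exact: path_ball in_ball.
Qed.

(* The empty graph P_0 has diameter 0, so the hypothesis excludes n = 0. *)
Lemma path0_diam : diam (path_rel 0) = 0.
Proof. by rewrite /diam big1 // => -[]. Qed.

Theorem proposition3p2 :
  (forall (T : finType) (e : rel T) (g : nat),
     simple_graph e -> connected_graph e ->
     g.+1 <= (diam e)./2 ->
     has_Rg_cutset e g /\ kappa e g <= #|T| - diam e)
  /\
  (forall (n g : nat),
     g.+1 <= (diam (path_rel n))./2 ->
     has_Rg_cutset (path_rel n) g /\
     kappa (path_rel n) g = n - diam (path_rel n)).
Proof.
have bound (T : finType) (e : rel T) (g : nat) :
    simple_graph e -> connected_graph e -> g.+1 <= (diam e)./2 ->
    has_Rg_cutset e g /\ kappa e g <= #|T| - diam e.
  move=> [sym_e _] conn_e half_diam.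
  have [S [RgS card_S]] := small_Rg_cutset sym_e conn_e half_diam.
  by split; [exists S | exact: leq_trans (kappa_le RgS) card_S].
split=> // -[|n] g half_diam; first by rewrite path0_diam in half_diam.
have [has_cut le_kappa] := bound _ _ g (@path_simple n.+1) (@path_connected n) half_diam.
split=> //; have kappa_pos := kappa_gt0 (@path_connected n) has_cut.
have := path_diam n; move: le_kappa kappa_pos; rewrite card_ord; lia.
Qed.
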